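(* Let $G=(V,E)$ be any $n$-vertex $d$-regular graph with girth at least $g$. For any map $\psi:V\to V$ with $\mathrm{rad}_G(\psi)<g/2-1$, we have $$\Pr_{v\in V}\left[|\psi(N_G(v))|<d-\sqrt{d}\right]<\frac{1}{\sqrt{d}},$$ where $v$ is chosen uniformly at random from $V$.
   Context: $G$ is an undirected unweighted graph; $d_G$ denotes its shortest-path metric and $N_G(v)$ the set of neighbors of $v$. The girth of $G$ is the length of its shortest cycle. For $\psi:V\to V$, $\mathrm{rad}_G(\psi)=\max_{v\in V}d_G(v,\psi(v))$. *)

From mathcomp Require Import all_boot all_order all_algebra.
Set Implicit Arguments. Unset Strict Implicit. Unset Printing Implicit Defensive.
Import Order.TTheory GRing.Theory Num.Theory.

Definition simple_graph (T : finType) (e : rel T) : Prop :=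
  symmetric e /\ irreflexive e.

Definition nbhd (T : finType) (e : rel T) (v : T) : {set T} := [set w | e v w].

Definition regular (T : finType) (e : rel T) (d : nat) : Prop :=
  forall v : T, #|nbhd e v| = d.

(* An acyclic graph has infinite girth, so the condition holds vacuously. *)
Definition girth_ge (T : finType) (e : rel T) (g : nat) : Prop :=
  forall s : seq T, uniq s -> (3 <= size s)%N -> cycle e s -> (g <= size s)%N.

Fixpoint walk (T : finType) (e : rel T) (k : nat) (x y : T) : bool :=
  if k is k'.+1 then [exists z, e x z && walk e k' z y] else x == y.

(* d_G(x,y) < r, where d_G(x,y) = min { k | walk of length k from x to y }
   (= +oo if none).  The minimum is < r iff some walk has length < r. *)
Definition dist_lt (R : numDomainType) (T : finType) (e : rel T) (x y : T) (r : R) : Prop :=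
  exists k : nat, walk e k x y /\ (k%:R < r)%R.

Definition rad_lt (R : numDomainType) (T : finType) (e : rel T) (psi : T -> T) (r : R) : Prop :=
  forall v : T, dist_lt e v (psi v) r.

From mathcomp Require Import all_boot all_order all_algebra.
From mathcomp Require Import zify lra.
Import Order.TTheory GRing.Theory Num.Theory.
Set Implicit Arguments. Unset Strict Implicit. Unset Printing Implicit Defensive.

(* Every vertex u sends its first step along a shortest path to psi u to a
   neighbour step u.  For a vertex v, two neighbours u <> w of v with
   psi u = psi w that do not step to v would close a cycle through v of length
   at most d(u, psi u) + d(w, psi w) + 2 < g.  Hence psi is injective on the
   neighbours of v that do not step to v, so |psi(N(v))| >= d - |step^-1(v)|.
   The fibres of step partition V, so their sizes sum to n, and Markov's
   inequality bounds the proportion of v with |step^-1(v)| > sqrt d. *)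

Lemma walk_pathP (T : finType) (e : rel T) k x y :
  reflect (exists p, [/\ path e x p, last x p = y & size p = k]) (walk e k x y).
Proof.
elim: k x => [|k IHk] x /=.
  apply: (iffP eqP) => [<-|]; first by exists [::].
  by case=> -[|z p] [// _ <-].
apply: (iffP existsP) => [[z /andP[xz /IHk[p [zp <- <-]]]]|].
  by exists (z :: p); rewrite /= xz zp.
case=> -[|z p] [xzp zy] // [zk]; case/andP: xzp => xz zp.
by exists z; rewrite xz; apply/IHk; exists p.
Qed.

Section ShortestPath.
Variables (T : eqType) (e : rel T) (x : T) (p : seq T).
Hypothesis p_path : path e x p.
Hypothesis p_shortest :
  forall q, path e x q -> last x q = last x p -> size p <= size q.

Lemma shortest_path_uniq : uniq (x :: p).
Proof.
move: (p_shortest); case: (shortenP p_path) => q q_path q_uniq q_sub p_min.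
apply: (leq_size_uniq q_uniq); last by rewrite /= ltnS p_min.
by move=> z; rewrite !in_cons => /orP[-> // | /q_sub ->]; rewrite orbT.
Qed.

Lemma shortest_path_adj_head z : e x z -> z \in p -> z = head x p.
Proof.
move=> xz zp; move: p_path p_shortest; case/splitPr: zp => p1 p2.
case: p1 => [//|y p1] yz_path p_min.
have := p_min (z :: p2); rewrite /= xz last_cat.
move: yz_path; rewrite cat_path /= => /and3P[_ _ -> /(_ isT erefl)].
by rewrite size_cat /= ltnNge leq_addl.
Qed.

End ShortestPath.

Lemma two_paths_cycle (T : eqType) (e : rel T) s p q :
  symmetric e -> path e s p -> path e s q -> uniq (s :: p) -> uniq (s :: q) ->
  last s p = last s q -> head s p != head s q ->
  exists c, [/\ uniq c, 3 <= size c, cycle e c & size c <= size p + size q].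
Proof.
move=> e_sym sp sq sp_uniq sq_uniq pq_last pq_head.
have meet : has (mem q) p.
  case: p q => [|x p] [|y q] in sp sq pq_head sp_uniq sq_uniq pq_last *;
    rewrite /= in pq_head sp_uniq sq_uniq pq_last.
  - by rewrite eqxx in pq_head.
  - by rewrite pq_last mem_last in sq_uniq.
  - by rewrite -pq_last mem_last in sp_uniq.
  by apply/hasP; exists (last x p); rewrite ?mem_last //= pq_last mem_last.
(* z is the first vertex of p on q; the cycle runs out along p to z and back along q. *)
move: pq_head sp sp_uniq pq_last; case/split_find: meet => z p1 p2 zq /hasPn p1q.
move: sq sq_uniq; case/path.splitP: zq p1q => q1 q2 p1q sq sq_uniq pq_head sp sp_uniq _.
move: sp_uniq sq_uniq; rewrite !cons_uniq !mem_cat !cat_uniq !negb_or.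
case/andP=> /andP[s_p1z _] /andP[p1z_uniq _].
rewrite mem_rcons in_cons negb_or rcons_uniq.
case/andP=> /andP[/andP[_ s_q1] _] /andP[/andP[z_q1 q1_uniq] _].
exists (s :: rcons p1 z ++ rev q1); split.
- rewrite cons_uniq mem_cat mem_rev negb_or s_p1z s_q1 cat_uniq rev_uniq.
  rewrite p1z_uniq q1_uniq /= andbT; apply/hasPn => w.
  rewrite mem_rev mem_rcons in_cons => w_q1; apply/norP; split.
    by apply: contraNneq z_q1 => <-.
  apply: contraL w_q1 => /p1q.
  by apply: contra => w_q1; rewrite inE mem_cat mem_rcons in_cons w_q1 orbT.
- rewrite /= size_cat size_rcons size_rev.
  by move: pq_head; case: (p1) (q1) => [|? ?] [|? ?] //=; rewrite eqxx.
- rewrite /= rcons_cat cat_path -rev_cons.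
  move: sp sq; rewrite !cat_path => /andP[-> _] /andP[sq _].
  rewrite last_rcons -[z](last_rcons s q1) -(belast_rcons s q1 z) rev_path.
  by rewrite (eq_path (e' := e)) // => a b; rewrite e_sym.
- by rewrite /= !size_cat !size_rcons size_rev; lia.
Qed.

Section StepFibres.
Variables (T : finType) (e : rel T) (g : nat) (psi : T -> T).
Hypotheses (e_sym : symmetric e) (e_irr : irreflexive e) (e_girth : girth_ge e g).
Hypothesis psi_near : forall u, exists2 k, walk e k u (psi u) & 2 * k + 2 < g.

Fact psi_reachable u : exists k, walk e k u (psi u).
Proof. by have [k uk _] := psi_near u; exists k. Qed.

Definition dist_psi u := ex_minn (psi_reachable u).

Lemma dist_psi_walk u : walk e (dist_psi u) u (psi u).
Proof. by rewrite /dist_psi; case: ex_minnP. Qed.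

Lemma dist_psi_min u k : walk e k u (psi u) -> dist_psi u <= k.
Proof. by rewrite /dist_psi; case: ex_minnP => m _; apply. Qed.

Lemma dist_psi_lt_girth u : 2 * dist_psi u + 2 < g.
Proof. by have [k /dist_psi_min] := psi_near u; lia. Qed.

Definition geodesic u p := [&& path e u p, last u p == psi u & size p == dist_psi u].

Lemma geodesic_exists u : exists p, geodesic u p.
Proof.
case/walk_pathP: (dist_psi_walk u) => p [up pl ps].
by exists p; rewrite /geodesic up pl ps !eqxx.
Qed.

Definition route u := xchoose (geodesic_exists u).

Definition step u := head u (route u).

Lemma routeP u :
  [/\ path e u (route u), last u (route u) = psi u & size (route u) = dist_psi u].
Proof. by have /and3P[-> /eqP-> /eqP->] := xchooseP (geodesic_exists u). Qed.

Lemma route_shortest u q :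
  path e u q -> last u q = last u (route u) -> size (route u) <= size q.
Proof.
have [_ -> ->] := routeP u => uq uq_last.
by apply: dist_psi_min; apply/walk_pathP; exists q.
Qed.

Lemma uniq_cons_route u v : e v u -> step u != v -> uniq [:: v, u & route u].
Proof.
move=> vu uv; have [u_route _ _] := routeP u; have u_shortest := @route_shortest u.
rewrite cons_uniq (shortest_path_uniq u_route u_shortest) andbT in_cons negb_or.
apply/andP; split; first by apply: contraTneq vu => ->; rewrite e_irr.
apply: contra uv => v_route; apply/eqP/esym.
by apply: (shortest_path_adj_head u_route u_shortest); rewrite // e_sym.
Qed.

Lemma psi_inj_off_fibre v : {in nbhd e v :\: step @^-1: [set v] &, injective psi}.
Proof.
move=> u w; rewrite !inE => /andP[uv vu] /andP[wv vw] psi_uw.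
apply/eqP/negPn/negP => uw.
have [u_route u_last u_size] := routeP u; have [w_route w_last w_size] := routeP w.
have vu_path : path e v (u :: route u) by rewrite /= vu.
have vw_path : path e v (w :: route w) by rewrite /= vw.
have same_end : last v (u :: route u) = last v (w :: route w).
  by rewrite /= u_last w_last.
have [c [c_uniq c_size c_cycle c_le]] := two_paths_cycle e_sym vu_path vw_path
  (uniq_cons_route vu uv) (uniq_cons_route vw wv) same_end uw.
have := e_girth c_uniq c_size c_cycle.
have := dist_psi_lt_girth u; have := dist_psi_lt_girth w.
by rewrite /= u_size w_size in c_le; lia.
Qed.

Lemma card_nbhd_le v : #|nbhd e v| <= #|psi @: nbhd e v| + #|step @^-1: [set v]|.
Proof.
rewrite -(cardsID (step @^-1: [set v]) (nbhd e v)) addnC leq_add //.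
  rewrite -(card_in_imset (@psi_inj_off_fibre v)).
  by apply/subset_leq_card/imsetS/subsetDl.
exact/subset_leq_card/subsetIr.
Qed.

End StepFibres.

Lemma sum_card_preimset1 (T U : finType) (f : T -> U) :
  \sum_(y : U) #|f @^-1: [set y]| = #|T|.
Proof.
rewrite -sum1_card (partition_big f xpredT) //=; apply: eq_bigr => y _.
by rewrite -sum1_card; apply: eq_bigl => x; rewrite !inE.
Qed.

Local Open Scope ring_scope.

Lemma markov_card (R : numDomainType) (T : finType) (a : T -> R) (t N : R) :
  (forall x, 0 <= a x) -> \sum_x a x <= N -> 0 < N ->
  #|[set x | t < a x]|%:R * t < N.
Proof.
move=> a_ge0 sum_le N_gt0; set S := [set x | t < a x].
have [-> | [x0 x0S]] := set_0Vmem S; first by rewrite cards0 mul0r.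
apply: lt_le_trans sum_le; apply: (@lt_le_trans _ _ (\sum_(x in S) a x)).
  rewrite mulr_natl -sumr_const; apply: ltr_sum => [|x]; last by rewrite inE.
  by apply/hasP; exists x0; rewrite ?mem_index_enum.
rewrite [leRHS](bigID (mem S)) /= lerDl.
by apply: sumr_ge0.
Qed.

Lemma lt_half_sub1 (R : realFieldType) (k m : nat) :
  (k%:R : R) < m%:R / 2 - 1 -> (2 * k + 2 < m)%N.
Proof. by rewrite -(ltr_nat R) natrD natrM; lra. Qed.

Theorem lemma1 (R : rcfType) (V : finType) (e : rel V) (n d g : nat)
  (Hsimple : simple_graph e) (Hn : #|V| = n) (Hn0 : (0 < n)%N) (Hd0 : (0 < d)%N)
  (Hreg : regular e d) (Hgirth : girth_ge e g) (psi : V -> V)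
  (Hrad : rad_lt e psi ((g%:R : R) / 2 - 1)) :
  (#|[set v : V | (#|psi @: nbhd e v|%:R : R) < d%:R - Num.sqrt (d%:R)]|%:R / n%:R : R)
    < 1 / Num.sqrt (d%:R).
Proof.
have [e_sym e_irr] := Hsimple.
have near u : exists2 k, walk e k u (psi u) & (2 * k + 2 < g)%N.
  by have [k [uk /lt_half_sub1]] := Hrad u; exists k.
pose fibre v := #|step near @^-1: [set v]|.
have sqrt_d_gt0 : 0 < Num.sqrt (d%:R : R) by rewrite sqrtr_gt0 ltr0n.
have n_gt0 : 0 < (n%:R : R) by rewrite ltr0n.
have bad_sub : [set v | (#|psi @: nbhd e v|%:R : R) < d%:R - Num.sqrt d%:R]
    \subset [set v | Num.sqrt (d%:R : R) < (fibre v)%:R].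
  apply/subsetP => v; rewrite !inE => small.
  have := card_nbhd_le e_sym e_irr Hgirth near v; rewrite Hreg -(ler_nat R) natrD.
  by lra.
have markov : #|[set v | Num.sqrt (d%:R : R) < (fibre v)%:R]|%:R * Num.sqrt d%:R
    < n%:R :> R.
  apply: (markov_card (a := fun v => (fibre v)%:R)) => //.
  by rewrite -natr_sum sum_card_preimset1 Hn.
rewrite ltr_pdivrMr // mul1r mulrC ltr_pdivlMr //; apply: le_lt_trans markov.
by rewrite ler_pM2r // ler_nat subset_leq_card.
Qed.
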